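(* Let $m,n\in\mathbb{N}$ and $(X,y,v)\in\mathbb{C}^{(mn\times mn)\cdot d}\times\mathbb{C}^{mn}\times\mathbb{C}^{mn}$. If $\|X\|_{\mathrm{col}}<\frac{1}{\sqrt n}$, then the linear functional $\ell_{X,y,v}$ defined on the orthonormal basis of $\mathscr{F}_n(\mathbb{C}^d)$ by $E_{\alpha,\beta}\star e_\omega\mapsto y^*\,E_{\alpha,\beta}\star e_\omega(X)\,v$ extends to a bounded linear functional on $\mathscr{F}_n(\mathbb{C}^d)$.
   Context: Equip $\mathbb{C}^{n\times n}$ with the Hilbert–Schmidt inner product and let $\mathscr{F}_n(\mathbb{C}^d)=\bigoplus_{\ell\ge0}\mathbb{C}^{n\times n}\otimes(\mathbb{C}^d\otimes\mathbb{C}^{n\times n})^{\otimes\ell}$ (Hilbert space tensor products). With $E_{i,j}$ the matrix units of $\mathbb{C}^{n\times n}$ and $e_1,\dots,e_d$ the standard basis of $\mathbb{C}^d$, for words $\alpha=a_0\cdots a_\ell,\beta=b_0\cdots b_\ell$ in letters $\{1,\dots,n\}$ and $\omega=w_1\cdots w_\ell$ in letters $\{1,\dots,d\}$ put $E_{\alpha,\beta}\star e_\omega=E_{a_0,b_0}\otimes e_{w_1}\otimes E_{a_1,b_1}\otimes\cdots\otimes e_{w_\ell}\otimes E_{a_\ell,b_\ell}$; these vectors ($\ell\ge0$) form an orthonormal basis of $\mathscr{F}_n(\mathbb{C}^d)$. For $X\in\mathbb{C}^{(mn\times mn)\cdot d}$ (column $d$-tuple of $mn\times mn$ matrices, $\|X\|_{\mathrm{col}}$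 the operator norm of the stacked $mnd\times mn$ matrix), the formal evaluation is $E_{\alpha,\beta}\star e_\omega(X)=(I_m\otimes E_{a_0,b_0})X_{w_1}(I_m\otimes E_{a_1,b_1})X_{w_2}\cdots X_{w_\ell}(I_m\otimes E_{a_\ell,b_\ell})\in\mathbb{C}^{mn\times mn}$. *)

(* complex numbers C := R[i] over an arbitrary realType R
   (for R the real numbers this is exactly the field of complex numbers). *)
From HB Require Import structures.
From mathcomp Require Import all_boot all_order all_algebra.
From mathcomp Require Import reals.
From mathcomp Require Import complex mxtens.
Set Implicit Arguments. Unset Strict Implicit. Unset Printing Implicit Defensive.
Import Order.TTheory GRing.Theory Num.Theory.
Local Open Scope ring_scope.

Section FockDefs.
Variable R : realType.
Local Notation C := R[i].

Definition vnorm k (u : 'cV[C]_k) : C := sqrtC (\sum_i `|u i 0| ^+ 2).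

(* ||X||_col < t, for X a column d-tuple of (mn x mn) matrices:
   the operator norm of the stacked (mnd x mn) matrix, i.e. the infimum of all
   s >= 0 with ||X u|| <= s ||u|| for all u, where
   ||X u||^2 = \sum_w ||X_w u||^2, is strictly less than t. *)
Definition colnorm_lt m n d (X : 'I_d -> 'M[C]_(m * n)) (t : C) : Prop :=
  exists s : C, [/\ 0 <= s, s < t &
    forall u : 'cV[C]_(m * n),
      sqrtC (\sum_(w < d) vnorm (X w *m u) ^+ 2) <= s * vnorm u].

Definition IE m n (a b : 'I_n) : 'M[C]_(m * n) :=
  (1%:M : 'M[C]_m) *t (delta_mx a b : 'M[C]_n).

(* Index set of the orthonormal basis of F_n(C^d): the basis vector
   E_{a0,b0} (x) e_{w1} (x) E_{a1,b1} (x) ... (x) e_{wl} (x) E_{al,bl}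
   is encoded as ((a0, b0), [:: (w1, a1, b1); ...; (wl, al, bl)]),
   l >= 0 arbitrary.  This is a bijective encoding of the triples
   (alpha, beta, omega) with |alpha| = |beta| = |omega| + 1. *)
Definition FockIdx n d := (('I_n * 'I_n) * seq ('I_d * 'I_n * 'I_n))%type.

Fixpoint tail_eval m n d (X : 'I_d -> 'M[C]_(m * n))
    (s : seq ('I_d * 'I_n * 'I_n)) : 'M[C]_(m * n) :=
  match s with
  | [::] => 1%:M
  | (w, a, b) :: s' => X w *m IE m a b *m tail_eval X s'
  end.

(* Formal evaluation E_{alpha,beta} * e_omega (X)
   = (I (x) E_{a0,b0}) X_{w1} (I (x) E_{a1,b1}) ... X_{wl} (I (x) E_{al,bl}). *)
Definition basis_eval m n d (X : 'I_d -> 'M[C]_(m * n)) (i : FockIdx n d)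
    : 'M[C]_(m * n) :=
  IE m i.1.1 i.1.2 *m tail_eval X i.2.

Definition ell m n d (X : 'I_d -> 'M[C]_(m * n)) (y v : 'cV[C]_(m * n))
    (i : FockIdx n d) : C :=
  ((map_mx Num.conj y)^T *m basis_eval X i *m v) 0 0.

(* A functional given by its values c on an orthonormal basis (indexed by I)
   extends to a bounded linear functional on the Hilbert space iff its linear
   extension to the (dense) linear span of the basis is bounded: for every
   finite family of distinct basis vectors b_i and coefficients f_i,
   |l(\sum f_i b_i)| = |\sum f_i c_i| <= K ||\sum f_i b_i|| = K sqrt(\sum |f_i|^2). *)
Definition extends_bounded (I : eqType) (c : I -> C) : Prop :=
  exists K : C, 0 <= K /\
    forall (S : seq I) (f : I -> C), uniq S ->
      `| \sum_(i <- S) f i * c i | <= K * sqrtC (\sum_(i <- S) `|f i| ^+ 2).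

End FockDefs.

(* By Cauchy-Schwarz, l_{X,y,v} is bounded as soon as its values on the
   orthonormal basis are square-summable.  A basis value is
   y^* (I (x) E_{a0,b0}) T v with T = X_{w1} (I (x) E_{a1,b1}) ... ; since
   \sum_{a,b} ||(I (x) E_{a,b}) u||^2 = n ||u||^2 and ||X||_col <= s < 1/sqrt n,
   each additional letter multiplies \sum ||T v||^2 by at most r = n s^2 < 1,
   and the geometric series over word lengths bounds \sum |l|^2 by
   n ||y||^2 ||v||^2 / (1 - r). *)

From HB Require Import structures.
From mathcomp Require Import all_boot all_order all_algebra.
From mathcomp Require Import reals.
From mathcomp Require Import complex mxtens.
From mathcomp Require Import ring.
Set Implicit Arguments.
Unset Strict Implicit.
Unset Printing Implicit Defensive.
Import Order.TTheory GRing.Theory Num.Theory.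
Local Open Scope ring_scope.

Lemma Lagrange_identity (R : comPzRingType) (I : Type) (r : seq I)
    (a b : I -> R) :
  ((\sum_(i <- r) a i ^+ 2) * (\sum_(i <- r) b i ^+ 2)
     - (\sum_(i <- r) a i * b i) ^+ 2) *+ 2
  = \sum_(i <- r) \sum_(j <- r) (a i * b j - a j * b i) ^+ 2.
Proof.
have PQ : (\sum_(i <- r) a i ^+ 2) * (\sum_(i <- r) b i ^+ 2)
    = \sum_(i <- r) \sum_(j <- r) a i ^+ 2 * b j ^+ 2.
  by rewrite big_distrl; apply: eq_bigr => i _; rewrite big_distrr.
have QP := etrans PQ (exchange_big _ _ _ _ _ _).
rewrite mulrnBl mulr2n {1}PQ QP expr2 big_distrl -big_split -sumrMnl -sumrB.
apply: eq_bigr => i _ /=; rewrite big_distrr -big_split -sumrMnl -sumrB.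
by apply: eq_bigr => j _ /=; rewrite !mulr2n; ring.
Qed.

Lemma CauchySchwarz_real_sum (R : numDomainType) (I : Type) (r : seq I)
    (a b : I -> R) :
  (forall i, a i \is Num.real) -> (forall i, b i \is Num.real) ->
  (\sum_(i <- r) a i * b i) ^+ 2
    <= (\sum_(i <- r) a i ^+ 2) * (\sum_(i <- r) b i ^+ 2).
Proof.
move=> ra rb; rewrite -subr_ge0 -(pmulrn_lge0 _ (isT : (0 < 2)%N)).
rewrite Lagrange_identity; apply: sumr_ge0 => i _; apply: sumr_ge0 => j _.
by rewrite real_exprn_even_ge0 // realB // realM.
Qed.

Lemma CauchySchwarz_sum (C : numClosedFieldType) (I : Type) (r : seq I)
    (f g : I -> C) :
  `|\sum_(i <- r) f i * g i|
    <= sqrtC (\sum_(i <- r) `|f i| ^+ 2) * sqrtC (\sum_(i <- r) `|g i| ^+ 2).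
Proof.
have sqr_ge0 (h : I -> C) : 0 <= \sum_(i <- r) `|h i| ^+ 2.
  by apply: sumr_ge0 => i _; rewrite exprn_ge0.
apply: le_trans (ler_norm_sum _ _ _) _; under eq_bigr do rewrite normrM.
have fg_ge0 : 0 <= \sum_(i <- r) `|f i| * `|g i|.
  by apply: sumr_ge0 => i _; rewrite mulr_ge0.
rewrite -(sqrCK fg_ge0) -sqrtCM ?nnegrE //.
rewrite ler_sqrtC ?nnegrE ?exprn_ge0 ?mulr_ge0 //.
by apply: CauchySchwarz_real_sum => i; apply: normr_real.
Qed.

Lemma uniq_sub_ler_sum (R : numDomainType) (I : eqType) (s s' : seq I)
    (F : I -> R) :
  uniq s -> {subset s <= s'} -> (forall i, 0 <= F i) ->
  \sum_(i <- s) F i <= \sum_(i <- s') F i.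
Proof.
move=> us ss' F0.
have /count_subseqP[_ /subseqP[m _ ->] perm_s] :
    forall i, (count_mem i s <= count_mem i s')%N.
  move=> i; rewrite count_uniq_mem //; case si : (i \in s) => //=.
  by rewrite -has_count has_pred1 ss'.
rewrite (perm_big _ perm_s) big_mask (big_tnth _ _ s') big_mkcond /=.
by apply: ler_sum => j _; case: ifP.
Qed.

Lemma geometric_sum_le (R : numFieldType) (r : R) (L : nat) :
  0 <= r -> r < 1 -> \sum_(k < L) r ^+ k <= (1 - r)^-1.
Proof.
move=> r0 r1; have r1_gt0 : 0 < 1 - r by rewrite subr_gt0.
have telescope : (1 - r) * \sum_(k < L) r ^+ k = 1 - r ^+ L.
  by rewrite -opprB mulNr -subrX1 opprB.
rewrite -[leLHS](mulKf (lt0r_neq0 r1_gt0)) telescope.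
by apply: ler_piMr; [rewrite invr_ge0 ltW | rewrite gerBl exprn_ge0].
Qed.

Definition vnorm2 (C : numDomainType) k (u : 'cV[C]_k) : C :=
  \sum_i `|u i 0| ^+ 2.

Lemma vnorm2_ge0 (C : numDomainType) k (u : 'cV[C]_k) : 0 <= vnorm2 u.
Proof. by apply: sumr_ge0 => i _; rewrite exprn_ge0. Qed.

Lemma sum_mxtens_index (V : nmodType) m n (F : 'I_(m * n) -> V) :
  \sum_k F k = \sum_(p < m) \sum_(q < n) F (mxtens_index (p, q)).
Proof.
rewrite pair_big /= (reindex (@mxtens_index m n)) /=.
  by apply: eq_bigr => -[].
exists (@mxtens_unindex m n) => k _.
  by rewrite mxtens_indexK.
by rewrite mxtens_unindexK.
Qed.

Lemma extends_bounded_of_sqr_sum (R : realType) (I : eqType) (c : I -> R[i])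
    (B : R[i]) :
  0 <= B -> (forall S : seq I, uniq S -> \sum_(i <- S) `|c i| ^+ 2 <= B) ->
  extends_bounded c.
Proof.
move=> B_ge0 sqr_sum_le; exists (sqrtC B); split=> [|S f uS].
  by rewrite sqrtC_ge0.
apply: le_trans (CauchySchwarz_sum S f c) _; rewrite mulrC ler_wpM2r //.
  by rewrite sqrtC_ge0 sumr_ge0 // => i _; rewrite exprn_ge0.
rewrite ler_sqrtC ?nnegrE ?sqr_sum_le //.
by rewrite sumr_ge0 // => i _; rewrite exprn_ge0.
Qed.

Section FockBound.
Variable R : realType.
Local Notation C := R[i].
Variables m n d : nat.

Lemma IE_mulmx_tens (a b : 'I_n) (u : 'cV[C]_(m * n)) p q :
  (IE R m a b *m u) (mxtens_index (p, q)) 0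
    = (q == a)%:R * u (mxtens_index (p, b)) 0.
Proof.
rewrite mxE sum_mxtens_index (bigD1 p) //= [X in _ + X]big1 ?addr0 => [|p' p'p].
  rewrite (bigD1 b) //= [X in _ + X]big1 ?addr0 => [|q' q'b].
    by rewrite /IE !mxE !mxtens_indexK /= !eqxx andbT mul1r.
  by rewrite /IE !mxE !mxtens_indexK /= eqxx (negbTE q'b) andbF mulr0 mul0r.
apply: big1 => q' _.
by rewrite /IE !mxE !mxtens_indexK /= eq_sym (negbTE p'p) !mul0r.
Qed.

Lemma sum_vnorm2_IE (u : 'cV[C]_(m * n)) :
  \sum_(a < n) \sum_(b < n) vnorm2 (IE R m a b *m u) = n%:R * vnorm2 u.
Proof.
have vnorm2_IE a b :
    vnorm2 (IE R m a b *m u) = \sum_(p < m) `|u (mxtens_index (p, b)) 0| ^+ 2.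
  rewrite /vnorm2 sum_mxtens_index; apply: eq_bigr => p _.
  rewrite (bigD1 a) //= big1 ?addr0 => [|q qa].
    by rewrite IE_mulmx_tens eqxx mul1r.
  by rewrite IE_mulmx_tens (negbTE qa) mul0r normr0 expr0n.
under eq_bigr do under eq_bigr do rewrite vnorm2_IE.
rewrite sumr_const card_ord /vnorm2 sum_mxtens_index exchange_big -mulr_natl.
by rewrite mulr1 mulr_natl exchange_big.
Qed.

Lemma colnorm_lt_sqr (X : 'I_d -> 'M[C]_(m * n)) (t : C) :
  colnorm_lt X t -> exists s, [/\ 0 <= s, s < t &
    forall u, \sum_(w < d) vnorm2 (X w *m u) <= s ^+ 2 * vnorm2 u].
Proof.
move=> [s [s_ge0 st Xs]]; exists s; split=> // u.
have sum_ge0 : 0 <= \sum_(w < d) vnorm2 (X w *m u).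
  by apply: sumr_ge0 => w _; apply: vnorm2_ge0.
have := Xs u; rewrite /vnorm; under eq_bigr do rewrite sqrtCK.
move=> /(lerXn2r 2).
rewrite !nnegrE sqrtC_ge0 mulr_ge0 ?sqrtC_ge0 ?vnorm2_ge0 //.
by move=> /(_ sum_ge0 isT); rewrite sqrtCK exprMn sqrtCK.
Qed.

Lemma colnorm_lt_contraction (X : 'I_d -> 'M[C]_(m * n)) :
  colnorm_lt X (sqrtC n%:R)^-1 -> exists r, [/\ 0 <= r, r < 1 &
    forall u, \sum_(x : 'I_d * 'I_n * 'I_n)
                vnorm2 (X x.1.1 *m IE R m x.1.2 x.2 *m u) <= r * vnorm2 u].
Proof.
move=> /colnorm_lt_sqr[s [s_ge0 s_lt X_le]].
have sqrt_n_gt0 : 0 < sqrtC n%:R :> C by rewrite -invr_gt0 (le_lt_trans s_ge0).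
exists (n%:R * s ^+ 2); split.
- by rewrite mulr_ge0 ?ler0n ?exprn_ge0.
- rewrite -(sqrtCK (n%:R : C)) -exprMn expr_lt1 ?mulr_ge0 ?sqrtC_ge0 ?ler0n //.
  by rewrite mulrC -(ltr_pdivlMr _ _ sqrt_n_gt0) mul1r.
- move=> u.
  rewrite -(pair_bigA _ (fun wa b => vnorm2 (X wa.1 *m IE R m wa.2 b *m u))) /=.
  rewrite -(pair_bigA _ (fun w a => \sum_b vnorm2 (X w *m IE R m a b *m u))) /=.
  rewrite exchange_big /=; under eq_bigr do rewrite exchange_big /=.
  apply: le_trans
    (_ : \sum_(a < n) \sum_(b < n) s ^+ 2 * vnorm2 (IE R m a b *m u) <= _).
    apply: ler_sum => a _; apply: ler_sum => b _.
    by under eq_bigr do rewrite -mulmxA; apply: X_le.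
  under eq_bigr do rewrite -mulr_sumr.
  by rewrite -mulr_sumr sum_vnorm2_IE mulrCA mulrA.
Qed.

Fixpoint fock_words k : seq (seq ('I_d * 'I_n * 'I_n)) :=
  if k is k'.+1 then
    [seq x :: t | x <- index_enum ('I_d * 'I_n * 'I_n)%type, t <- fock_words k']
  else [:: [::]].

Lemma mem_fock_words t : t \in fock_words (size t).
Proof.
elim: t => [|x t IHt] /=; first by rewrite inE.
by apply: (allpairs_f (fun x t => x :: t)); rewrite ?mem_index_enum.
Qed.

Definition fock_idx_upto L : seq (FockIdx n d) :=
  [seq (p, t) | p <- index_enum ('I_n * 'I_n)%type,
                t <- flatten [seq fock_words k | k <- index_iota 0 L.+1]].

Lemma mem_fock_idx_upto L (i : FockIdx n d) :
  (size i.2 <= L)%N -> i \in fock_idx_upto L.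
Proof.
case: i => p t /= tL; apply: (allpairs_f (fun p t => (p, t))).
  by rewrite mem_index_enum.
apply/flatten_mapP; exists (size t); last exact: mem_fock_words.
by rewrite mem_index_iota ltnS.
Qed.

Lemma sum_ell_head (X : 'I_d -> 'M[C]_(m * n)) (y v : 'cV[C]_(m * n)) t :
  \sum_(p : 'I_n * 'I_n) `|ell X y v (p, t)| ^+ 2
    <= n%:R * vnorm2 y * vnorm2 (tail_eval X t *m v).
Proof.
set w := tail_eval X t *m v.
have ell_CS (p : 'I_n * 'I_n) :
    `|ell X y v (p, t)| ^+ 2 <= vnorm2 y * vnorm2 (IE R m p.1 p.2 *m w).
  have -> : ell X y v (p, t) =
      \sum_k Num.conj (y k 0) * (IE R m p.1 p.2 *m w) k 0.
    rewrite /ell /basis_eval -!mulmxA mxE.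
    by apply: eq_bigr => k _; rewrite !mxE.
  rewrite -(sqrtCK (vnorm2 y)) -(sqrtCK (vnorm2 (_ *m w))) -exprMn.
  rewrite lerXn2r ?nnegrE ?mulr_ge0 ?sqrtC_ge0 ?vnorm2_ge0 //.
  apply: le_trans (CauchySchwarz_sum _ _ _) _.
  by under eq_bigr do rewrite norm_conjC.
apply: le_trans (ler_sum _ (fun p _ => ell_CS p)) _.
rewrite -mulr_sumr [n%:R * _]mulrC -mulrA.
apply: ler_wpM2l; first exact: vnorm2_ge0.
by rewrite -(pair_bigA _ (fun a b => vnorm2 (IE R m a b *m w))) sum_vnorm2_IE.
Qed.

Section Contraction.
Variables (X : 'I_d -> 'M[C]_(m * n)) (r : C).
Hypotheses (r_ge0 : 0 <= r) (r_lt1 : r < 1).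
Hypothesis X_contraction : forall u,
  \sum_(x : 'I_d * 'I_n * 'I_n) vnorm2 (X x.1.1 *m IE R m x.1.2 x.2 *m u)
    <= r * vnorm2 u.

Lemma sum_vnorm2_tail_eval (v : 'cV[C]_(m * n)) k :
  \sum_(t <- fock_words k) vnorm2 (tail_eval X t *m v) <= r ^+ k * vnorm2 v.
Proof.
elim: k => [|k IHk] /=; first by rewrite big_seq1 mul1mx mul1r.
rewrite big_allpairs_dep exchange_big /=.
apply: le_trans
  (_ : \sum_(t <- fock_words k) r * vnorm2 (tail_eval X t *m v) <= _).
  apply: ler_sum => t _; rewrite (eq_bigr (fun x =>
    vnorm2 (X x.1.1 *m IE R m x.1.2 x.2 *m (tail_eval X t *m v)))).
    exact: X_contraction.
  by move=> -[[w a] b] _ /=; rewrite !mulmxA.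
by rewrite -mulr_sumr exprS -mulrA; apply: ler_wpM2l.
Qed.

Lemma sum_ell_upto (y v : 'cV[C]_(m * n)) L :
  \sum_(i <- fock_idx_upto L) `|ell X y v i| ^+ 2
    <= n%:R * vnorm2 y * vnorm2 v * (1 - r)^-1.
Proof.
rewrite big_allpairs_dep exchange_big big_flatten big_map /=.
apply: le_trans (_ : \sum_(k <- index_iota 0 L.+1)
    n%:R * vnorm2 y * (r ^+ k * vnorm2 v) <= _).
  apply: ler_sum => k _; apply: le_trans (_ : \sum_(t <- fock_words k)
      n%:R * vnorm2 y * vnorm2 (tail_eval X t *m v) <= _).
    by apply: ler_sum => t _; apply: sum_ell_head.
  rewrite -mulr_sumr; apply: ler_wpM2l; last exact: sum_vnorm2_tail_eval.
  by rewrite mulr_ge0 ?ler0n ?vnorm2_ge0.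
rewrite big_mkord -mulr_sumr -[leRHS]mulrA.
apply: ler_wpM2l; first by rewrite mulr_ge0 ?ler0n ?vnorm2_ge0.
rewrite -mulr_suml mulrC.
by apply: ler_wpM2l; [exact: vnorm2_ge0 | exact: geometric_sum_le].
Qed.
End Contraction.
End FockBound.

Theorem mainTheorem8 (R : realType) (m n d : nat)
  (X : 'I_d -> 'M[R[i]]_(m * n)) (y v : 'cV[R[i]]_(m * n)) :
  colnorm_lt X (sqrtC (n%:R : R[i]))^-1 ->
  extends_bounded (ell X y v : FockIdx n d -> R[i]).
Proof.
move=> /colnorm_lt_contraction[r [r_ge0 r_lt1 X_contraction]].
apply: (extends_bounded_of_sqr_sum
  (B := n%:R * vnorm2 y * vnorm2 v * (1 - r)^-1)).
  by rewrite !mulr_ge0 ?ler0n ?vnorm2_ge0 // invr_ge0 subr_ge0 ltW.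
move=> S uS; apply: le_trans (sum_ell_upto r_ge0 r_lt1 X_contraction y v
  (\max_(i <- S) size i.2)).
apply: uniq_sub_ler_sum => // [i iS|i]; last by rewrite exprn_ge0.
by apply/mem_fock_idx_upto; apply: leq_bigmax_seq.
Qed.
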